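(* Let $\mathcal{G}$ be a connected undirected weighted graph (nonzero real weights, possibly negative) such that $L(\mathcal{G})$ has exactly one zero eigenvalue. Let $\mathcal{T}$ be a spanning tree with cycle subgraph $\mathcal{C}$. Then $R_{(\mathcal{T},\mathcal{C})}WR_{(\mathcal{T},\mathcal{C})}^T$ and $L_{ess}(\mathcal{T})$ are invertible and the Moore–Penrose pseudo-inverse of $L(\mathcal{G})$ is $$L^{\dagger}(\mathcal{G})=(E_{\mathcal{T}}^L)^T\big(R_{(\mathcal{T},\mathcal{C})}WR_{(\mathcal{T},\mathcal{C})}^T\big)^{-1}E_{\mathcal{T}}^L=(E_{\mathcal{T}}^L)^T L_{ess}(\mathcal{T})^{-1}E_{\mathcal{T}}^T,$$ where $E_{\mathcal{T}}^L=L_e(\mathcal{T})^{-1}E_{\mathcal{T}}^T$.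
   Context: A weighted graph $\mathcal{G}=(\mathcal{V},\mathcal{E},\mathcal{W})$ has weights $\mathcal{W}:\mathcal{E}\to\mathbb{R}\setminus\{0\}$ collected in the diagonal matrix $W$. With an arbitrary edge orientation, the incidence matrix $E$ has in the column of edge $(i,j)$ entry $+1$ in row $i$, $-1$ in row $j$, $0$ elsewhere; $L(\mathcal{G})=EWE^T$. For a spanning tree $\mathcal{T}$, $\mathcal{C}$ is the subgraph of the remaining edges, edges ordered so $E=[E_{\mathcal{T}}\ E_{\mathcal{C}}]$ and $W$ correspondingly. $L_e(\mathcal{T})=E_{\mathcal{T}}^TE_{\mathcal{T}}$ (invertible), $E_{\mathcal{T}}^L=L_e(\mathcal{T})^{-1}E_{\mathcal{T}}^T$ is a left inverse of $E_{\mathcal{T}}$, $R_{(\mathcal{T},\mathcal{C})}=[\,I\ \ L_e(\mathcal{T})^{-1}E_{\mathcal{T}}^TE_{\mathcal{C}}\,]$, and $L_{ess}(\mathcal{T})=L_e(\mathcal{T})R_{(\mathcal{T},\mathcal{C})}WR_{(\mathcal{T},\mathcal{C})}^T$. *)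

From HB Require Import structures.
From mathcomp Require Import all_boot all_order all_algebra.
Set Implicit Arguments. Unset Strict Implicit. Unset Printing Implicit Defensive.
Import Order.TTheory GRing.Theory Num.Theory.
Local Open Scope ring_scope.

(* A weighted graph on the vertex set 'I_n with m edges is given by an edge
   map ed : 'I_m -> 'I_n * 'I_n (edge j oriented from (ed j).1 to (ed j).2)
   and a weight map w : 'I_m -> R. *)

Definition simple_edges (n m : nat) (ed : 'I_m -> 'I_n * 'I_n) : Prop :=
  (forall j, (ed j).1 != (ed j).2) /\
  (forall j j', j != j' -> ed j <> ed j' /\ ed j <> ((ed j').2, (ed j').1)).

Definition adj_rel (n m : nat) (ed : 'I_m -> 'I_n * 'I_n) : rel 'I_n :=
  fun u v => [exists j, ((ed j).1 == u) && ((ed j).2 == v)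
                     || ((ed j).1 == v) && ((ed j).2 == u)].

Definition connected_edges (n m : nat) (ed : 'I_m -> 'I_n * 'I_n) : Prop :=
  forall u v : 'I_n, connect (adj_rel ed) u v.

Definition incidence (R : pzRingType) (n m : nat) (ed : 'I_m -> 'I_n * 'I_n)
  : 'M[R]_(n, m) :=
  \matrix_(i, j) (((i == (ed j).1)%:R) - ((i == (ed j).2)%:R)).

Definition weight_mx (R : pzRingType) (m : nat) (w : 'I_m -> R) : 'M[R]_m :=
  diag_mx (\row_j w j).

Definition is_MP_inverse (R : pzRingType) (n m : nat)
  (A : 'M[R]_(n, m)) (X : 'M[R]_(m, n)) : Prop :=
  [/\ A *m X *m A = A, X *m A *m X = X,
      (A *m X)^T = A *m X & (X *m A)^T = X *m A].

From HB Require Import structures.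
From mathcomp Require Import all_boot all_order all_algebra.
Set Implicit Arguments. Unset Strict Implicit. Unset Printing Implicit Defensive.
Import Order.TTheory GRing.Theory Num.Theory.
Local Open Scope ring_scope.

(* Connectivity of the spanning tree makes the left kernel of E_T the constant
   rows, so E_T has full column rank, L_e(T) = E_T^T E_T is invertible, and the
   columns of E_C, also annihilated by the constants, factor through E_T:
   E = E_T R.  Thus L = E_T M E_T^T with M = R W R^T, and conjugating by the
   invertible matrix [1 | E_T] turns L into diag(0, M L_e(T)); a simple zero
   eigenvalue of L therefore makes M L_e(T), hence M and L_ess, invertible.  The
   Penrose equations for (E_T^L)^T M^-1 E_T^L only use E_T^L E_T = 1 and the
   symmetry of E_T E_T^L. *)

Lemma mulmx_trmx_eq0 (R : realDomainType) m n (A : 'M[R]_(m, n)) :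
  A *m A^T = 0 -> A = 0.
Proof.
move=> AAt0; apply/matrixP => i j; rewrite mxE.
have := congr1 (fun M : 'M_m => M i i) AAt0; rewrite !mxE => sum_sq0.
have sq_ge0 (l : 'I_n) : true -> 0 <= A i l * A^T l i.
  by move=> _; rewrite mxE -expr2 sqr_ge0.
have /eqP := psumr_eq0P sq_ge0 sum_sq0 (i:=j) isT.
by rewrite mxE mulf_eq0 orbb => /eqP.
Qed.

Section Gram.
Variables (R : realFieldType) (m n : nat) (A : 'M[R]_(m, n)).

Lemma gram_unitmx : \rank A = n -> A^T *m A \in unitmx.
Proof.
move=> rkA; rewrite -row_free_unit -kermx_eq0; apply/rowV0P => v /sub_kermxP.
rewrite mulmxA => vAtA0.
have /mulmx_trmx_eq0 vAt0 : (v *m A^T) *m (v *m A^T)^T = 0.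
  by rewrite trmx_mul trmxK mulmxA vAtA0 mul0mx.
have rfAt : row_free A^T by rewrite /row_free mxrank_tr rkA.
by apply: (row_free_inj rfAt); rewrite vAt0 mul0mx.
Qed.

(* The factor is the least-squares solution of A X = B. *)
Lemma factor_through_gram r (B : 'M[R]_(m, r)) :
  A^T *m A \in unitmx -> (forall x : 'rV_m, x *m A = 0 -> x *m B = 0) ->
  B = A *m (invmx (A^T *m A) *m A^T *m B).
Proof.
move=> gramU kerAB; pose Y := B - A *m (invmx (A^T *m A) *m A^T *m B).
have AtY0 : A^T *m Y = 0.
  by rewrite /Y mulmxBr !mulmxA mulmxV // mul1mx subrr.
have YtB0 : Y^T *m B = 0.
  apply/row_matrixP => j; rewrite row_mul row0 kerAB //.
  by rewrite -row_mul -(trmxK A) -trmx_mul AtY0 trmx0 row0.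
have : Y^T *m Y^T^T = 0.
  rewrite trmxK {2}/Y mulmxBr YtB0 mulmxA -(trmxK A) -trmx_mul AtY0.
  by rewrite trmx0 mul0mx subrr.
by move=> /mulmx_trmx_eq0 /eqP; rewrite trmx_eq0 subr_eq0 => /eqP.
Qed.

End Gram.

Lemma char_poly_conjmx (R : fieldType) n (A S : 'M[R]_n) : S \in unitmx ->
  char_poly (invmx S *m A *m S) = char_poly A.
Proof.
move=> SU; rewrite /char_poly.
have SiS : map_mx (@polyC R) (invmx S) *m map_mx polyC S = 1%:M.
  by rewrite -map_mxM mulVmx // map_mx1.
have SSi : map_mx (@polyC R) S *m map_mx polyC (invmx S) = 1%:M.
  by rewrite -map_mxM mulmxV // map_mx1.
have -> : char_poly_mx (invmx S *m A *m S) =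
  map_mx polyC (invmx S) *m char_poly_mx A *m map_mx polyC S.
  rewrite /char_poly_mx mulmxBr mulmxBl !map_mxM.
  rewrite -(mulmxA (map_mx polyC (invmx S))) scalar_mxC mulmxA.
  by rewrite -(mulmxA _ (map_mx polyC (invmx S))) SiS mulmx1.
by rewrite !det_mulmx mulrC mulrA -det_mulmx SSi det1 mul1r.
Qed.

Lemma unitmx_of_mup0_X_char_poly (R : fieldType) n (N : 'M[R]_n) :
  mup 0 ('X * char_poly N) = 1%N -> N \in unitmx.
Proof.
have mupX : mup (0 : R) 'X = 1%N.
  by have := mup_XsubCX 1 (0 : R) 0; rewrite subr0 expr1 eqxx.
rewrite mupM ?polyX_eq0 ?monic_neq0 ?char_poly_monic // mupX => /eqP.
rewrite -{2}(addn0 1%N) eqn_add2l => /eqP mupN0.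
have : ~~ root (char_poly N) 0.
  by rewrite -dvdp_XsubCl XsubC_dvd ?monic_neq0 ?char_poly_monic // mupN0.
by rewrite /root horner_coef0 char_poly_det mulf_eq0 signr_eq0 unitmxE unitfE.
Qed.

Lemma is_MP_inverse_factor (R : comUnitRingType) n q (A : 'M[R]_(n, q))
    (B : 'M[R]_(q, n)) (M : 'M[R]_q) :
  B *m A = 1%:M -> M \in unitmx -> (A *m B)^T = A *m B ->
  is_MP_inverse (A *m M *m A^T) (B^T *m invmx M *m B).
Proof.
move=> BA MU ABsym.
have AtBt : A^T *m B^T = 1%:M by rewrite -trmx_mul BA trmx1.
have AX : A *m M *m A^T *m (B^T *m invmx M *m B) = A *m B.
  by rewrite !mulmxA -(mulmxA _ A^T) AtBt mulmx1 -(mulmxA _ M) mulmxV // mulmx1.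
have XA : B^T *m invmx M *m B *m (A *m M *m A^T) = (A *m B)^T.
  rewrite trmx_mul !mulmxA -(mulmxA _ B) BA mulmx1.
  by rewrite -(mulmxA _ (invmx M)) mulVmx // mulmx1.
split; rewrite ?AX ?XA ?trmxK ?ABsym //.
- by rewrite !mulmxA -(mulmxA _ B) BA mulmx1.
- by rewrite -ABsym trmx_mul !mulmxA -(mulmxA _ A^T) AtBt mulmx1.
Qed.

Lemma invmxM (R : comUnitRingType) n (A B : 'M[R]_n) :
  A \in unitmx -> B \in unitmx -> invmx (A *m B) = invmx B *m invmx A.
Proof.
move=> AU BU; have ABU : A *m B \in unitmx by rewrite unitmx_mul AU BU.
have ABinv : A *m B *m (invmx B *m invmx A) = 1%:M.
  by rewrite mulmxA -(mulmxA A) mulmxV // mulmx1 mulmxV.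
by rewrite -[LHS]mulmx1 -ABinv mulmxA mulVmx // mul1mx.
Qed.

Section ConstantLeftKernel.
Variables (R : realFieldType) (n : nat) (A : 'M[R]_(n.+1, n)).
Hypothesis ones_mulA : (const_mx 1 : 'rV[R]_n.+1) *m A = 0.
Hypothesis left_kerA : forall x : 'rV_n.+1, x *m A = 0 -> x = x 0 0 *: const_mx 1.

Lemma rank_const_left_kernel : \rank A = n.
Proof.
apply/eqP; rewrite eqn_leq rank_leq_col /=.
have kerA_ones : (kermx A <= (const_mx 1 : 'rV[R]_n.+1))%MS.
  apply/row_subP => i; have /sub_kermxP := row_sub i (kermx A).
  by move=> /left_kerA ->; rewrite scalemx_sub.
have := leq_trans (mxrankS kerA_ones) (rank_leq_row _).
by rewrite mxrank_ker leq_subLR addn1 ltnS.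
Qed.

Lemma gram_const_left_kernel_unitmx : A^T *m A \in unitmx.
Proof. exact/gram_unitmx/rank_const_left_kernel. Qed.

Lemma factor_const_left_kernel r (B : 'M[R]_(n.+1, r)) :
  (const_mx 1 : 'rV[R]_n.+1) *m B = 0 -> B = A *m (invmx (A^T *m A) *m A^T *m B).
Proof.
move=> ones_mulB; apply: factor_through_gram gram_const_left_kernel_unitmx _.
by move=> x /left_kerA ->; rewrite -scalemxAl ones_mulB scaler0.
Qed.

Lemma unitmx_row_ones : (row_mx (const_mx 1) A : 'M_(n.+1, 1 + n)) \in unitmx.
Proof.
rewrite -row_free_unit -kermx_eq0; apply/rowV0P => v /sub_kermxP vS0.
have {}vS0 : v *m (row_mx (const_mx 1) A : 'M_(n.+1, 1 + n)) = 0 := vS0.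
have [v_ones0 /left_kerA vE] : v *m (const_mx 1 : 'cV_n.+1) = 0 /\ v *m A = 0.
  by apply/eq_row_mx; rewrite row_mx0 -mul_mx_row.
move: v_ones0; rewrite vE => /(congr1 (fun M : 'M_1 => M 0 0)).
rewrite !mxE; under eq_bigr do rewrite !mxE !mulr1.
rewrite sumr_const card_ord => /eqP; rewrite mulrn_eq0 => /eqP v00.
by rewrite v00 scale0r.
Qed.

(* [1 | A] conjugates A M A^T to the block diagonal matrix diag(0, M A^T A). *)
Lemma char_poly_const_left_kernel (M : 'M[R]_n) :
  char_poly (A *m M *m A^T) = 'X * char_poly (M *m (A^T *m A)).
Proof.
pose S : 'M_(n.+1, 1 + n) := row_mx (const_mx 1) A.
pose D : 'M_(1 + n) := block_mx 0 0 0 (M *m (A^T *m A)).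
have AtOnes : A^T *m (const_mx 1 : 'cV_n.+1) = 0.
  by rewrite -[const_mx 1]trmx_const -trmx_mul ones_mulA trmx0.
have LS : A *m M *m A^T *m S = S *m D.
  rewrite mul_mx_row mul_row_block !mulmx0 !addr0 add0r.
  by rewrite -!mulmxA AtOnes !mulmx0.
have conjD : invmx S *m (A *m M *m A^T) *m S = D.
  by rewrite -mulmxA LS mulmxA mulVmx ?unitmx_row_ones // mul1mx.
have charD : char_poly D = 'X * char_poly (M *m (A^T *m A)).
  rewrite /char_poly /D char_block_diag_mx det_ublock.
  by rewrite /char_poly_mx map_mx0 subr0 det_scalar1.
by rewrite -charD -conjD char_poly_conjmx ?unitmx_row_ones.
Qed.

End ConstantLeftKernel.

Section Incidence.
Variables (R : pzRingType) (n q : nat) (ed : 'I_q -> 'I_n * 'I_n).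

Lemma incidence_rowE (x : 'rV[R]_n) j :
  (x *m incidence R ed) 0 j = x 0 (ed j).1 - x 0 (ed j).2.
Proof.
have sum_delta (a : 'I_n) : \sum_i x 0 i * (i == a)%:R = x 0 a.
  rewrite (bigD1 a) //= eqxx mulr1 big1 ?addr0 // => i /negbTE ->.
  by rewrite mulr0.
rewrite mxE -!sum_delta -sumrB; apply: eq_bigr => i _.
by rewrite mxE mulrBr.
Qed.

Lemma const_mul_incidence : (const_mx 1 : 'rV[R]_n) *m incidence R ed = 0.
Proof. by apply/matrixP => i j; rewrite ord1 incidence_rowE !mxE subrr. Qed.

Lemma incidence_left_kernel (u v : 'I_n) (x : 'rV[R]_n) :
  connect (adj_rel ed) u v -> x *m incidence R ed = 0 -> x 0 u = x 0 v.
Proof.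
move=> /connectP [s] + -> xE0; elim: s u => [|a s IHs] u //= /andP [uEa pas].
rewrite -(IHs a pas); case/existsP: uEa => j /orP [] /andP [/eqP e1 /eqP e2];
  have /eqP := congr1 (fun M : 'rV_q => M 0 j) xE0;
  by rewrite incidence_rowE mxE e1 e2 subr_eq0 => /eqP.
Qed.

End Incidence.

Lemma connected_incidence_left_kernel (R : pzRingType) n q
    (ed : 'I_q -> 'I_n.+1 * 'I_n.+1) (x : 'rV[R]_n.+1) :
  connected_edges ed -> x *m incidence R ed = 0 -> x = x 0 0 *: const_mx 1.
Proof.
move=> conn xE0; apply/matrixP => i j.
by rewrite ord1 !mxE mulr1 (incidence_left_kernel (conn 0 j) xE0).
Qed.

Theorem proposition2 (R : realFieldType) (p k : nat)
  (ed : 'I_(p + k) -> 'I_p.+1 * 'I_p.+1) (w : 'I_(p + k) -> R) :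
  simple_edges ed ->
  (forall j, w j != 0) ->
  connected_edges ed ->
  let E : 'M[R]_(p.+1, p + k) := incidence R ed in
  let W : 'M[R]_(p + k) := weight_mx w in
  let L : 'M[R]_p.+1 := E *m W *m E^T in
  mup 0 (char_poly L) = 1%N ->
  (* T is a spanning tree: its p edges connect all p+1 vertices *)
  connected_edges (fun j : 'I_p => ed (lshift k j)) ->
  let ET : 'M[R]_(p.+1, p) := lsubmx E in
  let EC : 'M[R]_(p.+1, k) := rsubmx E in
  let Le : 'M[R]_p := ET^T *m ET in
  let ETL : 'M[R]_(p, p.+1) := invmx Le *m ET^T in
  let Rm : 'M[R]_(p, p + k) := row_mx 1%:M (invmx Le *m ET^T *m EC) in
  let Less : 'M[R]_p := Le *m (Rm *m W *m Rm^T) in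
  [/\ Rm *m W *m Rm^T \in unitmx,
      Less \in unitmx,
      is_MP_inverse L (ETL^T *m invmx (Rm *m W *m Rm^T) *m ETL)
    & ETL^T *m invmx (Rm *m W *m Rm^T) *m ETL = ETL^T *m invmx Less *m ET^T].
Proof.
move=> _ _ _ E W L mupL connT ET EC Le ETL Rm Less.
have ones_mulE : (const_mx 1 : 'rV_p.+1) *m E = 0 by apply: const_mul_incidence.
have ones_mulET : (const_mx 1 : 'rV_p.+1) *m ET = 0.
  by rewrite mulmx_lsub ones_mulE linear0.
have ET_tree : ET = incidence R (fun j => ed (lshift k j)).
  by apply/matrixP => i j; rewrite !mxE.
have left_kerET (x : 'rV_p.+1) : x *m ET = 0 -> x = x 0 0 *: const_mx 1.
  by rewrite ET_tree; apply: connected_incidence_left_kernel.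
have LeU : Le \in unitmx := gram_const_left_kernel_unitmx left_kerET.
have E_factor : E = ET *m Rm.
  rewrite /Rm mul_mx_row mulmx1 -(factor_const_left_kernel left_kerET) ?hsubmxK //.
  by rewrite mulmx_rsub ones_mulE linear0.
set M := Rm *m W *m Rm^T.
have L_factor : L = ET *m M *m ET^T by rewrite /L E_factor trmx_mul !mulmxA.
have : M *m Le \in unitmx.
  apply: unitmx_of_mup0_X_char_poly.
  by rewrite -(char_poly_const_left_kernel ones_mulET left_kerET) -L_factor.
rewrite unitmx_mul => /andP [MU _].
have LessU : Less \in unitmx by rewrite unitmx_mul LeU MU.
split => //.
- rewrite L_factor; apply: is_MP_inverse_factor => //.
    by rewrite /ETL -mulmxA mulVmx.
  by rewrite /ETL !trmx_mul trmxK trmx_inv trmx_mul trmxK mulmxA.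
- by rewrite invmxM // /ETL !mulmxA.
Qed.
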